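(* Let $A=(a_{ij})$ be a nonnegative $n\times n$ matrix. Then $A$ is primitive if and only if $A$ is irreducible and there exists $j\in[n]$ such that $A$ is $j$-primitive.
   Context: $A$ is primitive if $A^k>0$ (entrywise) for some positive integer $k$. $A$ is reducible if there is a nonempty proper subset $I\subset[n]$ with $a_{ij}=0$ for all $i\in I$, $j\notin I$; otherwise irreducible. For $j\in[n]$, $A$ is $j$-primitive if there exists a positive integer $k$ with $(A^k)_{uj}>0$ for all $u\in[n]$. *)

From mathcomp Require Import all_boot all_order all_algebra.
Set Implicit Arguments. Unset Strict Implicit. Unset Printing Implicit Defensive.
Import Order.TTheory GRing.Theory Num.Theory.
Local Open Scope ring_scope.

(* Matrices are n x n with n >= 1 written as 'M[R]_n.+1 (indices 'I_n.+1). *)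

Definition nonneg_mx (R : numDomainType) (n : nat) (A : 'M[R]_n) : Prop :=
  forall i j, 0 <= A i j.

Definition primitive_mx (R : numDomainType) (n : nat) (A : 'M[R]_n.+1) : Prop :=
  exists k : nat, (0 < k)%N /\ forall i j, 0 < (A ^+ k) i j.

Definition reducible_mx (R : numDomainType) (n : nat) (A : 'M[R]_n.+1) : Prop :=
  exists I : {set 'I_n.+1}, [/\ I != set0, I != setT &
    forall i j, i \in I -> j \notin I -> A i j = 0].

Definition irreducible_mx (R : numDomainType) (n : nat) (A : 'M[R]_n.+1) : Prop :=
  ~ reducible_mx A.

Definition j_primitive_mx (R : numDomainType) (n : nat) (A : 'M[R]_n.+1)
    (j : 'I_n.+1) : Prop :=
  exists k : nat, (0 < k)%N /\ forall u, 0 < (A ^+ k) u j.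

From mathcomp Require Import all_boot all_order all_algebra.
Set Implicit Arguments. Unset Strict Implicit. Unset Printing Implicit Defensive.
Import Order.TTheory GRing.Theory Num.Theory.
Local Open Scope ring_scope.

(* A primitive matrix cannot keep a nonempty proper index set closed, since
   the zero block of a reducible matrix persists in all its powers.
   Conversely, if column j of A^k is positive then no row of A vanishes, so
   column j of A^m stays positive for every m >= k.  Irreducibility makes
   every index v reachable from j in the graph of A, say (A^(f v))_{jv} > 0,
   and then A^(k + M) > 0 with M the largest f v. *)

Definition mx_rel (R : pzRingType) (n : nat) (A : 'M[R]_n) : rel 'I_n :=
  [rel i j | A i j != 0].

Section ZeroBlock.
Variables (R : pzRingType) (n : nat) (A : 'M[R]_n.+1) (I : {set 'I_n.+1}).
Hypothesis A_closed : forall i j, i \in I -> j \notin I -> A i j = 0.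

Lemma expr_closed_eq0 m i j : i \in I -> j \notin I -> (A ^+ m) i j = 0.
Proof.
elim: m i j => [|m IHm] i j iI jNI.
  by rewrite expr0 mxE; case: eqP => // eq_ij; rewrite -eq_ij iI in jNI.
rewrite exprS mxE big1 // => l _.
by case: (boolP (l \in I)) => lI; [rewrite IHm ?mulr0 | rewrite A_closed ?mul0r].
Qed.

End ZeroBlock.

Lemma primitive_irreducible (R : numDomainType) (n : nat) (A : 'M[R]_n.+1) :
  primitive_mx A -> irreducible_mx A.
Proof.
move=> [k [_ Ak_gt0]] [I [I_neq0 I_neqT A_closed]].
have [i iI] := set0Pn _ I_neq0.
have [j jNI] : exists j, j \notin I.
  by apply/existsP; apply: contraR I_neqT => /existsPn I_full; apply/eqP/setP => x;
     rewrite inE; apply/negPn.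
by move: (Ak_gt0 i j); rewrite (expr_closed_eq0 A_closed) ?ltxx.
Qed.

Lemma irreducible_connect (R : numDomainType) (n : nat) (A : 'M[R]_n.+1) :
  irreducible_mx A -> forall i j, connect (mx_rel A) i j.
Proof.
move=> A_irr i j; apply/idPn => /negbTE ij_disconnected; apply: A_irr.
exists [set v | connect (mx_rel A) i v]; split.
- by apply/set0Pn; exists i; rewrite inE connect0.
- by apply/eqP => /setP/(_ j); rewrite !inE ij_disconnected.
- move=> u v; rewrite !inE => iu; apply: contraNeq => A_uv.
  by apply: connect_trans iu (connect1 _).
Qed.

Section NonnegMatrix.
Variables (R : numDomainType) (n : nat) (A : 'M[R]_n.+1).
Hypothesis A_ge0 : nonneg_mx A.

Lemma nonneg_mx_mul (B C : 'M[R]_n.+1) :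
  nonneg_mx B -> nonneg_mx C -> nonneg_mx (B * C).
Proof.
by move=> B_ge0 C_ge0 i j; rewrite mxE; apply: sumr_ge0 => l _; apply: mulr_ge0.
Qed.

Lemma nonneg_mx_expr m : nonneg_mx (A ^+ m).
Proof.
elim: m => [|m IHm] i j; first by rewrite expr0 mxE ler0n.
by rewrite exprS; apply: nonneg_mx_mul.
Qed.

Lemma mul_nonneg_mx_gt0 (B C : 'M[R]_n.+1) u l v :
  nonneg_mx B -> nonneg_mx C -> 0 < B u l -> 0 < C l v -> 0 < (B * C) u v.
Proof.
move=> B_ge0 C_ge0 Bul_gt0 Clv_gt0; rewrite mxE (bigD1 l) //=.
apply: lt_le_trans (mulr_gt0 Bul_gt0 Clv_gt0) _; rewrite lerDl.
by apply: sumr_ge0 => i _; apply: mulr_ge0.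
Qed.

Lemma nonneg_mx_gt0 i j : (0 < A i j) = mx_rel A i j.
Proof. by rewrite lt_def A_ge0 andbT. Qed.

Lemma path_expr_gt0 x p :
  path (mx_rel A) x p -> 0 < (A ^+ size p) x (last x p).
Proof.
elim: p x => [|y p IHp] x /=; first by rewrite expr0 mxE eqxx ltr01.
case/andP=> A_xy y_path; rewrite exprS.
by apply: (mul_nonneg_mx_gt0 _ (nonneg_mx_expr _)) (IHp _ y_path);
   rewrite // nonneg_mx_gt0.
Qed.

Lemma connect_expr_gt0 x y :
  connect (mx_rel A) x y -> exists m, 0 < (A ^+ m) x y.
Proof. by case/connectP=> p xp ->; exists (size p); apply: path_expr_gt0. Qed.

Lemma j_primitive_row_neq0 j : j_primitive_mx A j -> forall u, exists l, A u l != 0.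
Proof.
case=> [[|k] [//= _ Ak_col_gt0]] u; apply/existsP; apply: contraTT (Ak_col_gt0 u).
move/existsPn=> row_u_eq0; rewrite exprS mxE big1 ?ltxx // => l _.
by rewrite (eqP (negPn (row_u_eq0 l))) mul0r.
Qed.

Lemma j_primitive_expr_col_gt0 j : j_primitive_mx A j ->
  exists2 k, (0 < k)%N & forall m u, (k <= m)%N -> 0 < (A ^+ m) u j.
Proof.
move=> A_jprim; have [k [k_gt0 Ak_col_gt0]] := A_jprim.
exists k => // m u /subnKC <-; elim: (m - k)%N u => [|d IHd] u.
  by rewrite addn0.
have [l A_ul] := j_primitive_row_neq0 A_jprim u.
rewrite addnS exprS; apply: (mul_nonneg_mx_gt0 _ (nonneg_mx_expr _)) (IHd l) => //.
by rewrite nonneg_mx_gt0.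
Qed.

Lemma irreducible_j_primitive_primitive j :
  irreducible_mx A -> j_primitive_mx A j -> primitive_mx A.
Proof.
move=> A_irr A_jprim; have [k k_gt0 col_gt0] := j_primitive_expr_col_gt0 A_jprim.
have /fin_all_exists [f Af_gt0] : forall v, exists m, 0 < (A ^+ m) j v.
  by move=> v; apply/connect_expr_gt0/irreducible_connect.
exists (k + \max_v f v)%N; split; first by rewrite addn_gt0 k_gt0.
move=> u v; rewrite -(subnK (leq_bigmax v : f v <= \max_v f v)%N) addnA exprD.
apply: mul_nonneg_mx_gt0 (nonneg_mx_expr _) (nonneg_mx_expr _) _ (Af_gt0 v).
by apply: col_gt0; rewrite leq_addr.
Qed.

End NonnegMatrix.

Theorem proposition4p4 (R : realFieldType) (n : nat) (A : 'M[R]_n.+1) :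
  nonneg_mx A ->
  (primitive_mx A <-> irreducible_mx A /\ exists j : 'I_n.+1, j_primitive_mx A j).
Proof.
move=> A_ge0; split.
- move=> A_prim; split; first exact: primitive_irreducible.
  by have [k [k_gt0 Ak_gt0]] := A_prim; exists ord0, k.
- by case=> A_irr [j A_jprim]; apply: irreducible_j_primitive_primitive A_jprim.
Qed.
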